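(* Let $T$ be a tree with $n\ge 3$ vertices, and let $\delta'$ be the minimum degree of an internal vertex of $T$ (a vertex of degree greater than $1$). Then $$av_1(T)\le 2+\frac{n-\delta'-1}{2}.$$
   Context: For a graph $G=(V,E)$, a set $S\subseteq V$ is a $1$-nearly independent vertex set if the subgraph induced by $S$ has exactly one edge. $\sigma_1(G)$ is the number of such sets, $S_1(G)$ the sum of their sizes, and $av_1(G)=S_1(G)/\sigma_1(G)$. *)

From mathcomp Require Import all_boot all_order all_algebra.
Set Implicit Arguments. Unset Strict Implicit. Unset Printing Implicit Defensive.
Import Order.TTheory GRing.Theory Num.Theory.

Section Graphs.
Variables (T : finType) (e : rel T).

Definition simple_graph := symmetric e /\ irreflexive e.

Definition connected_graph := forall x y : T, connect e x y.

Definition acyclic_graph :=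
  forall p : seq T, 3 <= size p -> uniq p -> ~~ cycle e p.

Definition is_tree := [/\ simple_graph, connected_graph & acyclic_graph].

Definition deg (x : T) : nat := #|[set y | e x y]|.

Definition min_internal_deg : nat :=
  \big[minn/#|T|]_(v : T | 1 < deg v) deg v.

Definition induced_edges (S : {set T}) : nat :=
  #|[set [set x; y] | x in S, y in S & e x y]|.

Definition near_indep1 (S : {set T}) : bool := induced_edges S == 1.

Definition sigma1 : nat := #|[set S : {set T} | near_indep1 S]|.
Definition Ssum1 : nat := \sum_(S : {set T} | near_indep1 S) #|S|.
Definition av1 : rat := (Ssum1%:R / sigma1%:R)%R.

End Graphs.

(* Let S be 1-nearly independent with unique induced edge ab, and call a vertex
   free for S if it is adjacent to neither a nor b.  Then S consists of a, b
   and free vertices only.  Deleting a free vertex x from S keeps S 1-nearly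
   independent with the same free vertices, so S |-> S :\ x injects the pairs
   (S, x) with x free in S into the pairs (S, x) with x free outside S; hence
   on average at most half of the free vertices lie in S.  One endpoint of ab
   is internal (n >= 3 and the graph is connected), so its closed
   neighbourhood, of size at least delta' + 1, contains no free vertex: at most
   n - delta' - 1 vertices are free. *)
From mathcomp Require Import all_boot all_order all_algebra.
Import Order.TTheory GRing.Theory Num.Theory.
From mathcomp Require Import zify lra.
Set Implicit Arguments. Unset Strict Implicit. Unset Printing Implicit Defensive.

Lemma sum_card_exchange (I T : finType) (P : pred I) (A : I -> {set T}) :
  \sum_(i | P i) #|A i| = \sum_x #|[set i | P i & x \in A i]|.
Proof.
rewrite (eq_bigr (fun i => \sum_(x in A i) 1)) => [|i _]; last exact: esym (sum1_card _).
by rewrite (exchange_big_dep predT) //=; apply: eq_bigr => x _; rewrite sum1dep_card.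
Qed.

Section NearlyIndependentSets.
Variables (T : finType) (e : rel T).

Definition sole_edge (S : {set T}) (a b : T) :=
  [/\ a \in S, b \in S, e a b &
   forall y z, y \in S -> z \in S -> e y z -> [set y; z] = [set a; b]].

Definition free_vertices (S : {set T}) : {set T} :=
  [set x | [forall y in S, forall z in S, e y z ==> ~~ e x y]].

Lemma near_indep1P (S : {set T}) :
  near_indep1 e S <-> exists a b, sole_edge S a b.
Proof.
rewrite /near_indep1 /induced_edges; split.
  move=> /cards1P [E0 HE].
  have : E0 \in [set [set x; y] | x in S, y in S & e x y] by rewrite HE set11.
  case/imset2P => a b aS; rewrite inE => /andP [bS eab] E0E; subst E0.
  exists a, b; split => // y z yS zS eyz.
  have : [set y; z] \in [set [set x; y] | x in S, y in S & e x y].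
    by apply/imset2P; exists y z => //; rewrite inE zS.
  by rewrite HE => /set1P.
case=> a [b [aS bS eab Hab]]; apply/cards1P; exists [set a; b].
apply/setP => E; rewrite inE; apply/imset2P/eqP.
  by case=> y z yS; rewrite inE => /andP [zS eyz] ->; apply: Hab.
by move=> ->; exists a b => //; rewrite inE bS.
Qed.

Lemma min_internal_deg_le (v : T) : 1 < deg e v -> min_internal_deg e <= deg e v.
Proof.
move=> v_int; rewrite /min_internal_deg.
elim: (index_enum T) (mem_index_enum v) => [//|i r IH].
rewrite big_cons inE => /orP [/eqP <- | vr]; first by rewrite v_int geq_minl.
by case: ifP => _; [apply: leq_trans (geq_minr _ _) (IH vr) | apply: IH].
Qed.

Lemma min_internal_deg_le_card : min_internal_deg e <= #|T|.
Proof.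
rewrite /min_internal_deg; elim/big_ind: _ => // [x y Hx _|v _].
  exact: leq_trans (geq_minl _ _) Hx.
exact: max_card.
Qed.

Hypothesis e_sym : symmetric e.

Lemma sole_edgeC S a b : sole_edge S a b -> sole_edge S b a.
Proof.
case=> aS bS eab Hab; split => //; first by rewrite e_sym.
by move=> y z yS zS eyz; rewrite [RHS]setUC; apply: Hab.
Qed.

Lemma free_vertices_sole_edge S a b :
  sole_edge S a b -> free_vertices S = [set x | ~~ e x a && ~~ e x b].
Proof.
case=> aS bS eab Hab; apply/setP => x; rewrite !inE.
apply/forallP/andP => [Hx | [nxa nxb] y].
  split; [move: (Hx a) | move: (Hx b)].
    by rewrite aS /= => /forallP /(_ b); rewrite bS eab.
  by rewrite bS /= => /forallP /(_ a); rewrite aS e_sym eab.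
apply/implyP => yS; apply/forallP => z; apply/implyP => zS; apply/implyP => eyz.
have : y \in [set y; z] by rewrite !inE eqxx.
by rewrite (Hab y z) // !inE => /orP [] /eqP ->.
Qed.

Lemma setD_free_vertices S a b :
  sole_edge S a b -> S :\: free_vertices S = [set a; b].
Proof.
move=> HS; rewrite (free_vertices_sole_edge HS); case: HS => aS bS eab Hab.
apply/setP => x; rewrite !inE negb_and !negbK.
apply/andP/orP => [[/orP [exa | exb] xS] | [] /eqP ->].
- by have := Hab x a xS aS exa; move/setP/(_ x); rewrite !inE eqxx => /esym/orP.
- by have := Hab x b xS bS exb; move/setP/(_ x); rewrite !inE eqxx => /esym/orP.
- by rewrite eab orbT.
- by rewrite e_sym eab.
Qed.

Lemma sole_edgeD1 S a b x :
  sole_edge S a b -> x \in free_vertices S -> sole_edge (S :\ x) a b.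
Proof.
move=> HS; rewrite (free_vertices_sole_edge HS) inE => /andP [nxa nxb].
case: HS => aS bS eab Hab.
have xa : a != x by apply: contraNneq nxb => <-.
have xb : b != x by apply: contraNneq nxa => <-; rewrite e_sym.
split; rewrite ?inE ?xa ?xb // => y z /setD1P [_ yS] /setD1P [_ zS].
exact: Hab.
Qed.

Lemma free_verticesD1 S x :
  near_indep1 e S -> x \in free_vertices S ->
  near_indep1 e (S :\ x) /\ free_vertices (S :\ x) = free_vertices S.
Proof.
case/near_indep1P => a [b HS] xF; have HS' := sole_edgeD1 HS xF.
split; first by apply/near_indep1P; exists a, b.
by rewrite (free_vertices_sole_edge HS) (free_vertices_sole_edge HS').
Qed.

Lemma sum_card_free_in_le_out :
  \sum_(S | near_indep1 e S) #|S :&: free_vertices S| <=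
  \sum_(S | near_indep1 e S) #|free_vertices S :\: S|.
Proof.
rewrite (sum_card_exchange _ (fun S => S :&: _)) (sum_card_exchange _ (fun S => _ :\: S)).
apply: leq_sum => x _.
set In := [set S | _ & _]; set Out := [set S | _ & _].
rewrite -(@card_in_imset _ _ (fun S => S :\ x) In).
  apply/subset_leq_card/subsetP => Sx /imsetP [S].
  rewrite inE in_setI => /andP [niS /andP [xS xF]] ->.
  have [niSx FE] := free_verticesD1 niS xF.
  by rewrite inE niSx in_setD FE xF setD11.
move=> S1 S2; rewrite !inE => /and3P [_ x1 _] /and3P [_ x2 _] E.
by rewrite -(setD1K x1) E setD1K.
Qed.

Hypothesis e_irr : irreflexive e.

Lemma card_near_indep1 S :
  near_indep1 e S -> #|S| = (#|S :&: free_vertices S|).+2.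
Proof.
case/near_indep1P => a [b HS]; have [_ _ eab _] := HS.
have ab : a != b by apply: contraTneq eab => ->; rewrite e_irr.
by rewrite -(cardsID (free_vertices S) S) (setD_free_vertices HS) cards2 ab addn2.
Qed.

Lemma card_free_vertices_internal S a b :
  1 < deg e a -> sole_edge S a b ->
  #|free_vertices S| + min_internal_deg e + 1 <= #|T|.
Proof.
move=> a_int HS; rewrite (free_vertices_sole_edge HS); have [_ _ eab _] := HS.
set F := [set x | _].
have nbhd_notF : a |: [set y | e a y] \subset ~: F.
  apply/subsetP => x; rewrite !inE => /orP [/eqP -> | eax].
    by rewrite eab andbF.
  by rewrite e_sym eax.
have := subset_leq_card nbhd_notF; rewrite cardsU1 inE e_irr -(cardsC F).
have := min_internal_deg_le a_int; rewrite /deg; lia.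
Qed.

Lemma internal_endpoint a b :
  connected_graph e -> 3 <= #|T| -> e a b -> 1 < deg e a \/ 1 < deg e b.
Proof.
move=> conn n3 eab.
case: (leqP (deg e a) 1) => Ha; last by left.
case: (leqP (deg e b) 1) => Hb; last by right.
have nb_a y : e a y -> y = b.
  move=> eay; move/card_le1P: Ha => /(_ b); rewrite inE eab => /(_ isT y).
  by rewrite inE eay => /esym/eqP.
have nb_b y : e b y -> y = a.
  move=> eby; move/card_le1P: Hb => /(_ a); rewrite inE -e_sym eab => /(_ isT y).
  by rewrite inE eby => /esym/eqP.
have closed_ab c p : c \in [set a; b] -> path e c p -> last c p \in [set a; b].
  elim: p c => [//|d p IH] c cab /= /andP [ecd pd]; apply: IH pd.
  by move: cab; rewrite !inE => /orP [] /eqP cE; move: ecd; rewrite cE;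
    [move/nb_a | move/nb_b] => ->; rewrite eqxx ?orbT.
have : 0 < #|~: [set a; b]| by rewrite cardsCs setCK; have := cards2 a b; lia.
case/card_gt0P => x; rewrite inE; case/connectP: (conn a x) => p ep ->.
by rewrite closed_ab // !inE eqxx.
Qed.

Lemma card_free_vertices S :
  connected_graph e -> 3 <= #|T| -> near_indep1 e S ->
  #|free_vertices S| + min_internal_deg e + 1 <= #|T|.
Proof.
move=> conn n3 /near_indep1P [a [b HS]]; have [_ _ eab _] := HS.
case: (internal_endpoint conn n3 eab) => int.
  exact: card_free_vertices_internal int HS.
exact: card_free_vertices_internal int (sole_edgeC HS).
Qed.

Lemma Ssum1_bound :
  connected_graph e -> 3 <= #|T| ->
  2 * Ssum1 e + sigma1 e * (min_internal_deg e + 1) <= sigma1 e * (#|T| + 4).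
Proof.
move=> conn n3.
have sigma1E c : \sum_(S | near_indep1 e S) c = sigma1 e * c.
  by rewrite /sigma1 -sum_nat_const; apply: eq_bigl => S; rewrite inE.
rewrite /Ssum1 big_distrr /= -!sigma1E -big_split /=.
set In := fun S => #|S :&: free_vertices S|; set Out := fun S => #|free_vertices S :\: S|.
apply: (@leq_trans (\sum_(S | near_indep1 e S) (In S + (Out S + (min_internal_deg e + 5))))).
  rewrite (eq_bigr (fun S => In S + (In S + (min_internal_deg e + 5)))); last first.
    by move=> S niS; rewrite card_near_indep1 // /In; lia.
  by rewrite !big_split leq_add2l leq_add2r sum_card_free_in_le_out.
apply: leq_sum => S niS.
apply: leq_trans (leq_add (card_free_vertices conn n3 niS) (leqnn 4)).
by have := cardsID S (free_vertices S); rewrite setIC /In /Out; lia.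
Qed.

End NearlyIndependentSets.

Theorem mainTheorem10 (T : finType) (e : rel T) :
  is_tree e -> 3 <= #|T| ->
  (av1 e <= 2 + ((#|T|%:R - (min_internal_deg e)%:R - 1) / 2 : rat))%R.
Proof.
case=> [[e_sym e_irr] conn _] n3.
have := Ssum1_bound e_sym e_irr conn n3; have := min_internal_deg_le_card e.
rewrite /av1; move: (sigma1 e) (Ssum1 e) (min_internal_deg e) #|T| => s m d n.
rewrite -!(ler_nat rat) !natrD !natrM => le_dn bound.
have [-> | s_gt0] := posnP s; first by rewrite invr0 mulr0; lra.
by rewrite ler_pdivrMr ?ltr0n //; nra.
Qed.
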